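(* Let $R$ be a nontrivial finite commutative ring, $\Sigma$ an alphabet, and $r\in R\langle\langle\Sigma^*\rangle\rangle$ a series that is rational over $R$. Then $r\in\mathrm{Rev}(R,\Sigma)$ if and only if $\mathrm{supp}(r+x\cdot\underline{\Sigma^*})\in\mathrm{RevL}(R,\Sigma)$ for all $x\in R$, where $x\cdot\underline{\Sigma^*}$ denotes the series with coefficient $x$ at every word of $\Sigma^*$.
   Context: A ring is a semiring $(R,+,\cdot,0,1)$ whose additive monoid is an abelian group; nontrivial means $0\neq1$. For a semiring $S$ and finite nonempty alphabet $\Sigma$, a series is a map $r\colon\Sigma^*\to S$ with value $(r,w)$; the set of series is $S\langle\langle\Sigma^*\rangle\rangle$ with pointwise addition; the support is $\mathrm{supp}(r)=\{w\mid(r,w)\neq0\}$. A weighted automaton over $S$ and $\Sigma$ is $\mathcal{A}=(Q,\sigma,\iota,\tau)$ with $Q$ finite, $\sigma\colon Q\times\Sigma\times Q\to S$, $\iota,\tau\colon Q\to S$; a run on $w=a_1\cdots a_t$ is $q_0a_1q_1\cdots a_tq_t$ with all $\sigma(q_{k-1},a_k,q_k)\neq0$, of weight $\iota(q_0)\sigma(q_0,a_1,q_1)\cdots\sigma(q_{t-1},a_t,q_t)\tau(q_t)$, and $(\|\mathcal{A}\|,w)$ is the sum of weights of all runs on $w$. A series is rational over $S$ if it equals $\|\mathcal{A}\|$ for some weighted automaton $\mathcal{A}$ over $S$. $\mathcal{A}$ is reversible if for all $p,p',q,q'\in Q$, $a\in\Sigma$: $\sigma(p,a,q)\neq0\neq\sigma(p,a,q')$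 implies $q=q'$, and $\sigma(p,a,q)\neq0\neq\sigma(p',a,q)$ implies $p=p'$. $\mathrm{Rev}(S,\Sigma)$ is the set of series realised by reversible weighted automata over $S$ and $\Sigma$, and $\mathrm{RevL}(S,\Sigma)=\{\mathrm{supp}(r)\mid r\in\mathrm{Rev}(S,\Sigma)\}$. *)

From HB Require Import structures.
From mathcomp Require Import all_boot all_order all_algebra.
Set Implicit Arguments. Unset Strict Implicit. Unset Printing Implicit Defensive.
Import GRing.Theory.
Local Open Scope ring_scope.

Definition series (S : nmodType) (Sigma : finType) := seq Sigma -> S.

Definition supp (S : nmodType) (Sigma : finType) (r : series S Sigma) : pred (seq Sigma) :=
  fun w => r w != 0.

Record wautomaton (S : pzSemiRingType) (Sigma : finType) (Q : finType) := WAutomaton {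
  wa_sigma : Q -> Sigma -> Q -> S;
  wa_iota  : Q -> S;
  wa_tau   : Q -> S }.

(* A run on w = a_1...a_t is a sequence of states q_0 ... q_t with all
   transitions sigma(q_{k-1}, a_k, q_k) nonzero. *)
Definition is_run (S : pzSemiRingType) (Sigma Q : finType) (A : wautomaton S Sigma Q)
  (w : seq Sigma) (qs : {ffun 'I_(size w).+1 -> Q}) : bool :=
  [forall k : 'I_(size w),
     wa_sigma A (qs (widen_ord (leqnSn _) k)) (tnth (in_tuple w) k) (qs (lift ord0 k)) != 0].

Definition run_weight (S : pzSemiRingType) (Sigma Q : finType) (A : wautomaton S Sigma Q)
  (w : seq Sigma) (qs : {ffun 'I_(size w).+1 -> Q}) : S :=
  wa_iota A (qs ord0) *
  (\prod_(k < size w)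
     wa_sigma A (qs (widen_ord (leqnSn _) k)) (tnth (in_tuple w) k) (qs (lift ord0 k))) *
  wa_tau A (qs ord_max).

Definition behaviour (S : pzSemiRingType) (Sigma Q : finType) (A : wautomaton S Sigma Q)
  : series S Sigma :=
  fun w => \sum_(qs : {ffun 'I_(size w).+1 -> Q} | is_run A qs) run_weight A qs.

Definition rational (S : pzSemiRingType) (Sigma : finType) (r : series S Sigma) : Prop :=
  exists (Q : finType) (A : wautomaton S Sigma Q), forall w, r w = behaviour A w.

Definition reversible (S : pzSemiRingType) (Sigma Q : finType) (A : wautomaton S Sigma Q) : Prop :=
  (forall (p q q' : Q) (a : Sigma),
      wa_sigma A p a q != 0 -> wa_sigma A p a q' != 0 -> q = q') /\
  (forall (p p' q : Q) (a : Sigma),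
      wa_sigma A p a q != 0 -> wa_sigma A p' a q != 0 -> p = p').

Definition Rev (S : pzSemiRingType) (Sigma : finType) (r : series S Sigma) : Prop :=
  exists (Q : finType) (A : wautomaton S Sigma Q), reversible A /\ forall w, r w = behaviour A w.

Definition RevL (S : pzSemiRingType) (Sigma : finType) (L : pred (seq Sigma)) : Prop :=
  exists r : series S Sigma, Rev r /\ supp r =1 L.

Definition add_const (S : pzSemiRingType) (Sigma : finType) (r : series S Sigma) (x : S)
  : series S Sigma := fun w => r w + x.
Arguments RevL S {Sigma} L.

From HB Require Import structures.
From mathcomp Require Import all_boot all_order all_algebra.
Set Implicit Arguments. Unset Strict Implicit. Unset Printing Implicit Defensive.
Import GRing.Theory.
Local Open Scope ring_scope.

(* Call a series pp-rational if it is computed by a deterministic automaton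
   whose letters act as partial injections ("partial permutations") of a
   finite state set, weighted only at the ends: s(w) = sum_p i(p) t(p.w).
   Over a finite commutative ring these are exactly the reversible series.
   A pp-rational series is realised by its 0/1-weighted skeleton. Conversely,
   the unique run of a reversible automaton from p has weight
   prod_g g^(n_g(w)), where n_g counts its transitions of weight g; powers of
   g are eventually periodic, so g^n is a combination of the indicators of
   [n mod P = m] and of [n = j] for j below the pre-period, and both are
   tracked by a partial injection on a finite counter: a cyclic one, and one
   that dies after j (a saturating counter would not be injective).
   pp-rational series are closed under sums, pointwise products and every
   map R -> R applied pointwise, because s(w) depends only on the finite set
   of pairs (p, p.w). So if every supp(r + x) is reversible, each indicator
   [r(w) = y] = [s(w) = 0] is pp-rational, and so is r = sum_y y [r(w) = y]. *)

Definition pinjective (T U : Type) (f : T -> option U) :=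
  forall x y z, f x = Some z -> f y = Some z -> x = y.

Section PartialRuns.
Variables (Sigma Q : Type) (step : Sigma -> Q -> option Q).

Fixpoint prun (w : seq Sigma) (p : Q) : option Q :=
  if w is a :: w' then obind (prun w') (step a p) else Some p.

Fixpoint pcount (mark : Sigma -> Q -> Q -> bool) (w : seq Sigma) (p : Q) : nat :=
  if w is a :: w' then
    (if step a p is Some q then (mark a p q + pcount mark w' q)%N else 0%N)
  else 0%N.

End PartialRuns.

Section PartialPermutationSeries.
Variables (R : comPzRingType) (Sigma : finType).

Definition ppseries (Q : finType) (step : Sigma -> Q -> option Q) (i t : Q -> R)
  : series R Sigma :=
  fun w => \sum_p i p * oapp t 0 (prun step w p).

Definition pprational (s : series R Sigma) : Prop :=
  exists (Q : finType) (step : Sigma -> Q -> option Q) (i t : Q -> R),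
    (forall a, pinjective (step a)) /\ s =1 ppseries step i t.

Lemma pprational_ext s s' : pprational s -> s =1 s' -> pprational s'.
Proof.
by move=> [Q [step [i [t [inj_step Es]]]]] Es'; exists Q, step, i, t; split=> // w; rewrite -Es'.
Qed.

Lemma pprational_cst (c : R) : pprational (fun _ => c).
Proof.
exists unit, (fun _ _ => Some tt), (fun _ => c), (fun _ => 1); split; first by move=> a [] [].
move=> w; rewrite /ppseries (big_pred1 tt); last by case.
have -> : prun (fun _ _ => Some tt) w tt = Some tt by elim: w.
by rewrite mulr1.
Qed.

Lemma pprationalMl (c : R) s : pprational s -> pprational (fun w => c * s w).
Proof.
move=> [Q [step [i [t [inj_step Es]]]]].
exists Q, step, (fun p => c * i p), t; split=> // w.
by rewrite Es /ppseries mulr_sumr; apply: eq_bigr => p _; rewrite mulrA.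
Qed.

Lemma pprationalD s1 s2 :
  pprational s1 -> pprational s2 -> pprational (fun w => s1 w + s2 w).
Proof.
move=> [Q1 [st1 [i1 [t1 [inj1 E1]]]]] [Q2 [st2 [i2 [t2 [inj2 E2]]]]].
pose step a (x : Q1 + Q2) :=
  match x with inl p => omap inl (st1 a p) | inr p => omap inr (st2 a p) end.
pose i x := match x with inl p => i1 p | inr p => i2 p end.
pose t x := match x with inl p => t1 p | inr p => t2 p end.
exists (Q1 + Q2)%type, step, i, t; split.
  move=> a [p|p] [p'|p'] [q|q] /=;
    case E: (_ a p) => [x|] //= -[<-]; case E': (_ a p') => [y|] //= -[Exy];
    by rewrite Exy in E'; rewrite ?(inj1 _ _ _ _ E E') ?(inj2 _ _ _ _ E E').
have prun_inl w p : prun step w (inl p) = omap inl (prun st1 w p).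
  by elim: w p => //= a w IH p; case: (st1 a p).
have prun_inr w p : prun step w (inr p) = omap inr (prun st2 w p).
  by elim: w p => //= a w IH p; case: (st2 a p).
move=> w; rewrite E1 E2 /ppseries big_sumType /=.
by congr (_ + _); apply: eq_bigr => p _;
  rewrite ?prun_inl ?prun_inr; [case: (prun st1 w p) | case: (prun st2 w p)].
Qed.

Lemma pprationalM s1 s2 :
  pprational s1 -> pprational s2 -> pprational (fun w => s1 w * s2 w).
Proof.
move=> [Q1 [st1 [i1 [t1 [inj1 E1]]]]] [Q2 [st2 [i2 [t2 [inj2 E2]]]]].
pose step a (x : Q1 * Q2) :=
  if (st1 a x.1, st2 a x.2) is (Some q1, Some q2) then Some (q1, q2) else None.
exists (Q1 * Q2)%type, step, (fun x => i1 x.1 * i2 x.2), (fun x => t1 x.1 * t2 x.2).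
split.
  move=> a [p1 p2] [p1' p2'] [q1 q2]; rewrite /step /=.
  case E: (st1 a p1) => // [x]; case F: (st2 a p2) => // [y] [<- <-].
  case E': (st1 a p1') => // [x']; case F': (st2 a p2') => // [y'] [Ex Ey].
  by rewrite Ex in E'; rewrite Ey in F'; rewrite (inj1 _ _ _ _ E E') (inj2 _ _ _ _ F F').
have prun_pair w p1 p2 : prun step w (p1, p2) =
    if (prun st1 w p1, prun st2 w p2) is (Some q1, Some q2) then Some (q1, q2) else None.
  elim: w p1 p2 => //= a w IH p1 p2; rewrite /step /=.
  by case: (st1 a p1) => [x|]; case: (st2 a p2) => [y|] //=; case: (prun st1 w x).
move=> w; rewrite E1 E2 /ppseries big_distrlr pair_bigA /=; apply: eq_bigr => -[p1 p2] _.
rewrite /= prun_pair mulrACA.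
by case: (prun st1 w p1) => [x|]; case: (prun st2 w p2) => [y|]; rewrite /= ?(mulr0, mul0r).
Qed.

Lemma pprational_sum (I : Type) (r : seq I) (F : I -> series R Sigma) :
  (forall i, pprational (F i)) -> pprational (fun w => \sum_(i <- r) F i w).
Proof.
move=> ratF; elim: r => [|i r IH].
  by apply: (pprational_ext (pprational_cst 0)) => w; rewrite big_nil.
by apply: (pprational_ext (pprationalD (ratF i) IH)) => w; rewrite big_cons.
Qed.

Lemma pprational_prod (I : Type) (r : seq I) (F : I -> series R Sigma) :
  (forall i, pprational (F i)) -> pprational (fun w => \prod_(i <- r) F i w).
Proof.
move=> ratF; elim: r => [|i r IH].
  by apply: (pprational_ext (pprational_cst 1)) => w; rewrite big_nil.
by apply: (pprational_ext (pprationalM (ratF i) IH)) => w; rewrite big_cons.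
Qed.

Lemma eq_set_natrE (T : finType) (X Y : {set T}) :
  (X == Y)%:R = \prod_x (if x \in Y then (x \in X)%:R else 1 - (x \in X)%:R) :> R.
Proof.
have [->|neqXY] := eqVneq X Y.
  by rewrite big1 // => x _; case: (x \in Y); rewrite ?subrr ?subr0.
have /existsP [x Xx_neq_Yx] : [exists x, (x \in X) != (x \in Y)].
  apply: contraR neqXY => /existsPn XY; apply/eqP/setP => x.
  exact/eqP/negbNE/XY.
rewrite (bigD1 x) //=.
by move: Xx_neq_Yx; case: (x \in X); case: (x \in Y); rewrite //= ?subrr mul0r.
Qed.

Section Reachability.
Variables (Q : finType) (step : Sigma -> Q -> option Q).
Hypothesis inj_step : forall a, pinjective (step a).

Definition reach (w : seq Sigma) : {set Q * Q} := [set x | prun step w x.1 == Some x.2].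

Lemma pprational_reach (x : Q * Q) : pprational (fun w => (x \in reach w)%:R).
Proof.
exists Q, step, (fun p => (p == x.1)%:R), (fun q => (q == x.2)%:R); split=> // w.
rewrite /ppseries (bigD1 x.1) //= eqxx mul1r big1 ?addr0 => [|p /negbTE->]; last first.
  by rewrite mul0r.
by rewrite inE; case: (prun step w x.1) => [q|] //=.
Qed.

Lemma ppseries_reach (i t : Q -> R) w :
  ppseries step i t w = \sum_(x in reach w) i x.1 * t x.2.
Proof.
pose G p q := if (p, q) \in reach w then i p * t q else 0.
rewrite /ppseries [RHS]big_mkcond [RHS](eq_bigr (fun x => G x.1 x.2)); last by case.
rewrite -pair_bigA /=.
apply: eq_bigr => p _; case E: (prun step w p) => [q|] /=.
  rewrite (bigD1 q) //= /G inE E eqxx big1 ?addr0 // => q' /negbTE nq'.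
  by rewrite inE E /= (inj_eq Some_inj) eq_sym nq'.
by rewrite mulr0 big1 // => q' _; rewrite /G inE E.
Qed.

Lemma pprational_reach_fun (F : {set Q * Q} -> R) : pprational (fun w => F (reach w)).
Proof.
apply: (pprational_ext (s := fun w => \sum_Y F Y *
  \prod_x (if x \in Y then (x \in reach w)%:R else 1 - (x \in reach w)%:R))).
  apply: pprational_sum => Y; apply: pprationalMl; apply: pprational_prod => x.
  case: (x \in Y); first exact: pprational_reach.
  apply: pprationalD; first exact: pprational_cst.
  by apply: (pprational_ext (pprationalMl (-1) (pprational_reach x))) => w; rewrite mulN1r.
move=> w; rewrite (bigD1 (reach w)) //= -eq_set_natrE eqxx mulr1 big1 ?addr0 //.
by move=> Y /negbTE; rewrite -eq_set_natrE eq_sym => ->; rewrite mulr0.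
Qed.

End Reachability.

Lemma pprational_comp (g : R -> R) s : pprational s -> pprational (fun w => g (s w)).
Proof.
move=> [Q [step [i [t [inj_step Es]]]]].
apply: (pprational_ext (pprational_reach_fun inj_step
  (fun Y => g (\sum_(x in Y) i x.1 * t x.2)))) => w.
by rewrite Es ppseries_reach.
Qed.

Section Counting.
Variables (Q : finType) (step : Sigma -> Q -> option Q) (mark : Sigma -> Q -> Q -> bool).
Hypothesis inj_step : forall a, pinjective (step a).

Definition count_step (C : Type) (inc : C -> option C) a (x : Q * C) : option (Q * C) :=
  if step a x.1 is Some q then
    (if mark a x.1 q then omap (pair q) (inc x.2) else Some (q, x.2))
  else None.

Lemma prun_count_step (C : Type) (inc : C -> option C) w p c :
  prun (count_step inc) w (p, c) =
  if prun step w p is Some q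
  then omap (pair q) (iter (pcount step mark w p) (obind inc) (Some c)) else None.
Proof.
have iter_None n : iter n (obind inc) None = None by elim: n => //= n ->.
elim: w p c => [|a w IH] p c //=; rewrite [count_step inc a _]/count_step /=.
case: (step a p) => [q|] //=; case: (mark a p q) => /=; last by rewrite IH.
rewrite add0n -iterS iterSr /=; case: (inc c) => [c'|] /=; first by rewrite IH.
by rewrite iter_None; case: (prun step w q).
Qed.

Lemma pprational_count (C : finType) (inc : C -> option C) (c0 : C) (P : pred C) p q :
  pinjective inc ->
  pprational (fun w => ((prun step w p == Some q) &&
     oapp P false (iter (pcount step mark w p) (obind inc) (Some c0)))%:R).
Proof.
move=> inj_inc; exists (Q * C)%type, (count_step inc), (fun x => (x == (p, c0))%:R),
  (fun x => ((x.1 == q) && P x.2)%:R); split.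
  move=> a [p1 c1] [p2 c2] [q' c']; rewrite /count_step /=.
  case E1: (step a p1) => [q1|] //; case E2: (step a p2) => [q2|] // S1 S2.
  have target x r c : (if mark a x r then omap (pair r) (inc c) else Some (r, c)) =
      Some (q', c') -> r = q'.
    by case: (mark a x r) => [|[]//]; case: (inc c) => //= ? [].
  move: (target _ _ _ S1) (target _ _ _ S2) => eq1 eq2; subst q1 q2.
  have eq_p := inj_step E1 E2; subst p2.
  case: (mark a p1 q') S1 S2 => [|[<-] [<-] //].
  case F1: (inc c1) => [d1|] //= [<-]; case F2: (inc c2) => [d2|] //= [Ed].
  by rewrite Ed in F2; rewrite (inj_inc _ _ _ F1 F2).
move=> w; rewrite /ppseries (bigD1 (p, c0)) //= eqxx mul1r big1 ?addr0; last first.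
  by move=> x /negbTE ->; rewrite mul0r.
rewrite prun_count_step; case: (prun step w p) => [q'|] //=.
by case: (iter _ _ _) => [c|] //=; rewrite andbF.
Qed.

Lemma pprational_count_mod n m p q :
  pprational (fun w => ((prun step w p == Some q) && (pcount step mark w p %% n.+1 == m)%N)%:R).
Proof.
have iter_ordS k : iter k (obind (Some \o @ordS n.+1)) (Some ord0) = Some (inZp k).
  elim: k => [|k IH]; first by congr Some; apply: val_inj; rewrite /= mod0n.
  by rewrite iterS IH /=; congr Some; apply: val_inj; rewrite /= -addn1 modnDml addn1.
have inj_ordS : pinjective (Some \o @ordS n.+1).
  by move=> x y z [<-] /Some_inj /ordS_inj ->.
apply: (pprational_ext (pprational_count ord0 (fun c => val c == m) p q inj_ordS)) => w.
by rewrite iter_ordS.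
Qed.

Lemma pprational_count_eq j p q :
  pprational (fun w => ((prun step w p == Some q) && (pcount step mark w p == j)%N)%:R).
Proof.
pose inc (c : 'I_j.+1) : option 'I_j.+1 := insub c.+1.
have iter_inc k : iter k (obind inc) (Some ord0) = insub k.
  elim: k => [|k IH]; first by case: insubP => [c _ c0|//]; congr Some; apply: val_inj.
  rewrite iterS IH; case: insubP => [c lt_kj val_c|ge_kj] /=; first by rewrite /inc val_c.
  by rewrite insubF //; apply: contraNF ge_kj => /ltnW.
have inj_inc : pinjective inc.
  move=> x y z; rewrite /inc; case: insubP => // x' _ val_x' [<-].
  case: insubP => // y' _ val_y' [eq_xy]; apply: val_inj; apply: succn_inj.
  by rewrite -val_x' -val_y' eq_xy.
apply: (pprational_ext (pprational_count ord0 (fun c => val c == j) p q inj_inc)) => w.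
rewrite iter_inc; case: insubP => [c _ <- //|ge_cj] /=.
by congr (_ && _)%:R; apply/esym/negbTE; apply: contraNneq ge_cj => ->.
Qed.

End Counting.

End PartialPermutationSeries.

Lemma forall_ord_recl n (P : pred 'I_n.+1) :
  [forall k, P k] = P ord0 && [forall k : 'I_n, P (lift ord0 k)].
Proof.
apply/forallP/andP => [P_all|[P0 P_lift] k]; first by split=> //; apply/forallP => k.
by case: (unliftP ord0 k) => [j ->|->] //; apply: (forallP P_lift).
Qed.

Lemma tnth_in_tuple_lift (T : Type) (a : T) w (k : 'I_(size w)) :
  tnth (in_tuple (a :: w)) (lift ord0 k) = tnth (in_tuple w) k.
Proof. by rewrite !(tnth_nth a). Qed.

Section DeterministicAutomata.
Variables (R : pzSemiRingType) (Sigma Q : finType) (A : wautomaton R Sigma Q).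
Hypothesis A_det : forall p q q' a,
  wa_sigma A p a q != 0 -> wa_sigma A p a q' != 0 -> q = q'.

Definition dstep (a : Sigma) (p : Q) : option Q := [pick q | wa_sigma A p a q != 0].

(* [next a p] defaults to [p] when there is no [a]-transition, so [state],
   [path] and [rweight] below are meaningful only along runs that survive. *)
Definition next (a : Sigma) (p : Q) : Q := odflt p (dstep a p).

Lemma dstepP a p q : (dstep a p == Some q) = (wa_sigma A p a q != 0).
Proof.
rewrite /dstep; case: pickP => [q' nz_q'|zero] /=; last by rewrite zero.
apply/eqP/idP => [[<-] //|nz_q]; congr Some; exact: A_det nz_q' nz_q.
Qed.

Lemma dstepE a p :
  dstep a p = if wa_sigma A p a (next a p) != 0 then Some (next a p) else None.
Proof.
rewrite /next; case E: (dstep a p) => [q|] /=; first by move/eqP: E; rewrite dstepP => ->.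
by move: E; rewrite /dstep; case: pickP => // zero _; rewrite zero.
Qed.

Definition state (p : Q) (w : seq Sigma) (k : nat) : Q :=
  foldl (fun q a => next a q) p (take k w).

Definition path (p : Q) (w : seq Sigma) : {ffun 'I_(size w).+1 -> Q} :=
  [ffun k : 'I_(size w).+1 => state p w k].

Fixpoint rweight (p : Q) (w : seq Sigma) : R :=
  if w is a :: w' then wa_sigma A p a (next a p) * rweight (next a p) w' else 1.

Lemma state0 p w : state p w 0 = p.
Proof. by rewrite /state take0. Qed.

Lemma state_cons p a w k : state p (a :: w) k.+1 = state (next a p) w k.
Proof. by []. Qed.

Lemma is_run_path_cons p a w :
  is_run A (path p (a :: w)) =
  (wa_sigma A p a (next a p) != 0) && is_run A (path (next a p) w).
Proof.
rewrite /is_run forall_ord_recl !ffunE /= /bump /= add1n state0 state_cons state0 (tnth_nth a).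
congr andb; apply: eq_forallb => k.
by rewrite !ffunE /= tnth_in_tuple_lift /bump /= !add1n.
Qed.

Lemma prun_dstep p w :
  prun dstep w p = if is_run A (path p w) then Some (state p w (size w)) else None.
Proof.
elim: w p => [|a w IH] p.
  by have -> : is_run A (path p [::]) by apply/forallP => -[].
by rewrite is_run_path_cons /= dstepE; case: ifP => //= _; rewrite IH.
Qed.

Lemma run_weight_path p w :
  run_weight A (path p w) = wa_iota A p * rweight p w * wa_tau A (state p w (size w)).
Proof.
rewrite /run_weight !ffunE /= state0; congr (_ * _ * _).
elim: w p => [|a w IH] p; first by rewrite big_ord0.
rewrite big_ord_recl !ffunE /= /bump /= add1n state0 state_cons state0 (tnth_nth a) /=.
congr (_ * _); rewrite -IH; apply: eq_bigr => k _.
by rewrite !ffunE /= tnth_in_tuple_lift /bump /= !add1n.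
Qed.

Lemma state_succ x0 p w k :
  (k < size w)%N -> state p w k.+1 = next (nth x0 w k) (state p w k).
Proof. by move=> lt_kw; rewrite /state (take_nth x0 lt_kw) foldl_rcons. Qed.

Lemma next_eq a p q : wa_sigma A p a q != 0 -> next a p = q.
Proof. by rewrite -dstepP /next => /eqP ->. Qed.

Lemma run_path w (qs : {ffun 'I_(size w).+1 -> Q}) :
  is_run A qs -> qs = path (qs ord0) w.
Proof.
move=> /forallP qs_run.
suff qsE k (lt_kw : (k < (size w).+1)%N) : qs (Ordinal lt_kw) = state (qs ord0) w k.
  by apply/ffunP => k; rewrite ffunE -qsE; congr (qs _); apply: val_inj.
elim: k lt_kw => [|k IH] lt_kw; first by rewrite state0; congr (qs _); apply: val_inj.
have lt_kw' : (k < size w)%N by [].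
have -> : Ordinal lt_kw = lift ord0 (Ordinal lt_kw') by apply: val_inj.
have := qs_run (Ordinal lt_kw'); set x0 := tnth _ _ => /next_eq <-.
rewrite (state_succ x0 _ lt_kw') -(IH (ltnW lt_kw)) {1}/x0 (tnth_nth x0).
by congr (next _ (qs _)); apply: val_inj.
Qed.

Lemma behaviour_det w :
  behaviour A w = \sum_p wa_iota A p * rweight p w * oapp (wa_tau A) 0 (prun dstep w p).
Proof.
rewrite /behaviour (partition_big (fun qs : {ffun 'I_(size w).+1 -> Q} => qs ord0) predT) //=.
apply: eq_bigr => p _; rewrite prun_dstep.
have runs_from_p qs : is_run A qs && (qs ord0 == p) = is_run A (path p w) && (qs == path p w).
  apply/andP/andP => [[qs_run /eqP <-]|[p_run /eqP ->]].
    by rewrite -(run_path qs_run) eqxx.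
  by rewrite ffunE state0.
rewrite (eq_bigl _ _ runs_from_p); case: ifP => _ /=; last by rewrite big_pred0 ?mulr0.
by rewrite (big_pred1 (path p w)) ?run_weight_path.
Qed.

End DeterministicAutomata.

Lemma expr_eventually_periodic (R : finPzSemiRingType) (g : R) :
  exists K P, forall n, (K <= n)%N -> g ^+ n = g ^+ (n %% P.+1 + P.+1 * K).
Proof.
have [i [j [lt_ij eq_gij]]] : exists i j, (i < j)%N /\ g ^+ i = g ^+ j.
  pose f (k : 'I_#|R|.+1) := g ^+ k.
  have /injectivePn [i [j neq_ij eq_fij]] : ~~ injectiveb f.
    by apply/injectiveP => /leq_card; rewrite card_ord ltnn.
  case: (ltngtP i j) => [lt_ij|lt_ji|/val_inj eq_ij]; first by exists i, j.
    by exists j, i.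
  by rewrite eq_ij eqxx in neq_ij.
exists i, (j - i).-1; rewrite prednK ?subn_gt0 //.
set P := (j - i)%N.
have period m : (i <= m)%N -> g ^+ (m + P) = g ^+ m.
  move=> le_im; rewrite -{1}(subnK le_im) -addnA subnKC ?(ltnW lt_ij) //.
  by rewrite exprD -eq_gij -exprD subnK.
have periodM t m : (i <= m)%N -> g ^+ (m + P * t) = g ^+ m.
  move=> le_im; elim: t => [|t IH]; first by rewrite muln0 addn0.
  by rewrite mulnSr addnA period ?IH // (leq_trans le_im (leq_addr _ _)).
move=> n le_in; rewrite -(periodM i n le_in).
have -> : (n + P * i = n %% P + P * i + P * (n %/ P))%N.
  by rewrite {1}(divn_eq n P) mulnC [RHS]addnC addnA.
rewrite periodM // (leq_trans _ (leq_addl _ _)) // leq_pmull // subn_gt0 //.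
Qed.

Lemma sum_ord_natr_eq (R : pzSemiRingType) N (k : nat) (F : nat -> R) :
  \sum_(m < N) F m * (k == m :> nat)%:R = if (k < N)%N then F k else 0.
Proof.
under eq_bigr => m _ do rewrite mulr_natr mulrb eq_sym.
by rewrite -big_mkcond big_ord1_eq.
Qed.

Lemma prod_natb_mull (R : comPzSemiRingType) (I : finType) (i0 : I) (b : bool) (F : I -> R) :
  \prod_i (b%:R * F i) = b%:R * \prod_i F i.
Proof.
case: b; last by rewrite mul0r (bigD1 i0) //= !mul0r.
by rewrite mul1r; apply: eq_bigr => i _; rewrite mul1r.
Qed.

Section FiniteRings.
Variables (R : finComNzRingType) (Sigma : finType).

Lemma pprational_count_expr (Q : finType) (step : Sigma -> Q -> option Q)
    (mark : Sigma -> Q -> Q -> bool) (g : R) p q :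
  (forall a, pinjective (step a)) ->
  pprational (fun w => (prun step w p == Some q)%:R * g ^+ pcount step mark w p).
Proof.
move=> inj_step; have [K [P gE]] := expr_eventually_periodic g.
pose per m := g ^+ (m + P.+1 * K); pose corr n := g ^+ n - per (n %% P.+1)%N.
have exprE n : g ^+ n = \sum_(m < P.+1) per m * ((n %% P.+1)%N == m)%:R +
                        \sum_(j < K) corr j * (n == j)%:R.
  rewrite !sum_ord_natr_eq ltn_pmod //.
  by case: ltnP => [_|le_Kn]; [rewrite addrC subrK | rewrite addr0 gE].
apply: (pprational_ext (pprationalD
  (pprational_sum (index_enum 'I_P.+1) (fun m : 'I_P.+1 =>
     pprationalMl (per m) (pprational_count_mod _ mark inj_step P m p q)))
  (pprational_sum (index_enum 'I_K) (fun j : 'I_K =>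
     pprationalMl (corr j) (pprational_count_eq _ mark inj_step j p q))))) => w /=.
rewrite exprE; case: (prun step w p == Some q) => /=; last first.
  by rewrite mul0r !big1 ?addr0 // => m _; rewrite mulr0.
by rewrite mul1r.
Qed.

Lemma pprational_levels (s : series R Sigma) :
  (forall y, pprational (fun w => (s w == y)%:R : R)) -> pprational s.
Proof.
move=> levels; apply: (pprational_ext (pprational_sum (index_enum R)
  (fun y => pprationalMl y (levels y)))) => w.
rewrite (bigD1 (s w)) //= eqxx mulr1 big1 ?addr0 // => y /negbTE.
by rewrite eq_sym => ->; rewrite mulr0.
Qed.

Section ReversibleAutomata.
Variables (Q : finType) (A : wautomaton R Sigma Q).
Hypothesis A_rev : reversible A.

Let A_det := A_rev.1.

Lemma pinjective_dstep a : pinjective (dstep A a).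
Proof.
move=> p p' q /eqP; rewrite (dstepP A_det) => nz_p /eqP; rewrite (dstepP A_det) => nz_p'.
exact: A_rev.2 _ _ _ _ nz_p nz_p'.
Qed.

Definition weight_mark (g : R) (a : Sigma) (p q : Q) : bool := wa_sigma A p a q == g.

Lemma rweight_prod p w : prun (dstep A) w p != None ->
  rweight A p w = \prod_(g : R) g ^+ pcount (dstep A) (weight_mark g) w p.
Proof.
elim: w p => [|a w IH] p /=; first by rewrite big1.
rewrite (dstepE A_det); case: ifP => //= nz_next /IH ->.
under [RHS]eq_bigr => g _ do rewrite exprD.
rewrite big_split /=; congr (_ * _).
rewrite (bigD1 (wa_sigma A p a (next A a p))) //= /weight_mark eqxx expr1 big1 ?mulr1 //.
by move=> g /negbTE; rewrite eq_sym => ->.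
Qed.

Lemma pprational_behaviour : pprational (behaviour A).
Proof.
apply: (pprational_ext (s := fun w => \sum_p \sum_q wa_iota A p * wa_tau A q *
   \prod_(g : R) ((prun (dstep A) w p == Some q)%:R *
                  g ^+ pcount (dstep A) (weight_mark g) w p))).
  do 2![apply: pprational_sum => ?]; apply: pprationalMl; apply: pprational_prod => g.
  exact: pprational_count_expr pinjective_dstep.
move=> w; rewrite (behaviour_det A_det); apply: eq_bigr => p _.
under eq_bigr => q _ do rewrite (prod_natb_mull (0 : R)).
case E: (prun (dstep A) w p) => [q|] /=; last first.
  by rewrite mulr0 big1 // => q _; rewrite mul0r mulr0.
rewrite (bigD1 q) //= eqxx mul1r [X in _ + X]big1 ?addr0.
  by rewrite rweight_prod ?E // mulrAC.
by move=> q' nq'; rewrite (inj_eq Some_inj) eq_sym (negbTE nq') mul0r mulr0.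
Qed.

End ReversibleAutomata.
End FiniteRings.

Lemma pprational_Rev (R : comNzRingType) (Sigma : finType) (s : series R Sigma) :
  pprational s -> Rev s.
Proof.
move=> [Q [step [i [t [inj_step Es]]]]].
have natb_neq0 (b : bool) : ((b%:R : R) != 0) = b by case: b; rewrite ?oner_neq0 ?eqxx.
pose A := WAutomaton (fun p a q => (step a p == Some q)%:R : R) i t.
have A_det p q q' a : wa_sigma A p a q != 0 -> wa_sigma A p a q' != 0 -> q = q'.
  by rewrite /= !natb_neq0 => /eqP -> /eqP [].
exists Q, A; split.
  by split=> // p p' q a; rewrite /= !natb_neq0 => /eqP E /eqP E'; apply: inj_step E E'.
move=> w; rewrite Es (behaviour_det A_det) /ppseries.
apply: eq_bigr => p _; rewrite -mulrA; congr (_ * _).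
elim: w p => [|a w IH] p /=; first by rewrite mul1r.
case E: (step a p) => [q|] /=; last by rewrite !mul0r.
have nz_q : wa_sigma A p a q != 0 by rewrite /= E eqxx natb_neq0.
have /eqP -> : dstep A a p == Some q by rewrite (dstepP A_det).
by rewrite (next_eq A_det nz_q) /= eqxx mul1r IH.
Qed.

Lemma Rev_pprational (R : finComNzRingType) (Sigma : finType) (s : series R Sigma) :
  Rev s <-> pprational s.
Proof.
split=> [[Q [A [A_rev Es]]]|/pprational_Rev //].
by apply: (pprational_ext (pprational_behaviour A_rev)) => w; rewrite Es.
Qed.

Local Close Scope ring_scope.

Theorem proposition7 (R : finComNzRingType) (Sigma : finType) (Sigma_nonempty : 0 < #|Sigma|)
  (r : series R Sigma) (r_rational : rational r) :
  Rev r <-> (forall x : R, RevL R (supp (add_const r x))).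
Proof.
split=> [/Rev_pprational r_pp x | supp_RevL].
  exists (add_const r x); split=> //; apply/Rev_pprational.
  exact: pprationalD r_pp (pprational_cst _ x).
apply/Rev_pprational/pprational_levels => y.
have [s [/Rev_pprational s_pp supp_s]] := supp_RevL (- y)%R.
apply: (pprational_ext (pprational_comp (fun z => (z == 0)%:R)%R s_pp)) => w.
by have /negb_inj := supp_s w; rewrite /supp /add_const subr_eq0 => ->.
Qed.
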